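(* The language class $\mathbf{GRLOWJ}$ is a proper subset of the class $\mathbf{CS}$ of context-sensitive languages, i.e., $\mathbf{GRLOWJ}\subset\mathbf{CS}$.
   Context: $\mathbf{CS}$ is the class of context-sensitive languages (languages accepted by linear bounded automata). ''Subword'' means a contiguous factor. A GRLOWJFA is a tuple $\mathcal{A}=(\Sigma,Q,q_0,F,R)$ with $\Sigma$ a finite alphabet, $Q$ a finite state set, $q_0\in Q$, $F\subseteq Q$, and $R\subset Q\times\Sigma^+\times Q$ a finite set of rules such that for each $p\in Q$, $w\in\Sigma^+$ at most one $q$ has $(p,w,q)\in R$ (meaning: go from $p$ to $q$ deleting $w$). $\Sigma_p=\{w:(p,w,q)\in R\text{ for some }q\}$. Configurations lie in $\Sigma^*Q\Sigma^*$. Moves $\curvearrowright$: (1) for $t,u,v\in\Sigma^*$ and $(p,x,q)\in R$: $tpuxv\curvearrowright tuqv$ provided $u$ contains no word of $\Sigma_p$ as a subword and there are no $u_1,x_2\in\Sigma^*$, $u_2,x_1\in\Sigma^+$ with $u=u_1u_2$, $x=x_1x_2$, $u_2x_1=x$; (2) for $x\in\Sigma^+$, $y\in\Sigma^*$ with $y$ containing no word of $\Sigma_p$ as a subword: $xpy\curvearrowright pxy$. $L_{GRL}(\mathcal{A})=\{w\in\Sigma^*: q_0w\curvearrowright^* q_f \text{ for some } q_f\in F\}$. $\mathbf{GRLOWJ}$ is the class of languages so accepted. *)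

From mathcomp Require Import all_boot.
Set Implicit Arguments. Unset Strict Implicit. Unset Printing Implicit Defensive.

Inductive star (T : Type) (R : T -> T -> Prop) : T -> T -> Prop :=
| star_refl x : star R x x
| star_step x y z : R x y -> star R y z -> star R x z.

Record grlowjfa (Sigma : finType) := GRLOWJFA {
  gstate : finType;
  gstart : gstate;
  gfinal : {set gstate};
  grules : seq (gstate * seq Sigma * gstate);
  grules_nonempty : forall p w q, (p, w, q) \in grules -> w != [::];
  grules_det : forall p w q q',
      (p, w, q) \in grules -> (p, w, q') \in grules -> q = q'
}.

Definition in_Sigma_p (Sigma : finType) (A : grlowjfa Sigma) (p : gstate A)
  (w : seq Sigma) : Prop := exists q, (p, w, q) \in grules A.

Definition no_factor (Sigma : finType) (A : grlowjfa Sigma) (p : gstate A)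
  (u : seq Sigma) : Prop := forall w, @in_Sigma_p Sigma A p w -> ~~ infix w u.

Definition no_overlap (Sigma : finType) (u x : seq Sigma) : Prop :=
  ~ exists u1 u2 x1 x2 : seq Sigma,
      [/\ u = u1 ++ u2, x = x1 ++ x2, u2 <> [::], x1 <> [::] & u2 ++ x1 = x].

(* configurations t p v in Sigma^* Q Sigma^*, as triples (t, p, v) *)
Definition gconfig (Sigma : finType) (A : grlowjfa Sigma) : Type :=
  (seq Sigma * gstate A * seq Sigma)%type.

Inductive gstep (Sigma : finType) (A : grlowjfa Sigma) : gconfig A -> gconfig A -> Prop :=
| gstep_rule (t u x v : seq Sigma) (p q : gstate A) :
    (p, x, q) \in grules A -> @no_factor Sigma A p u -> no_overlap u x ->
    gstep (t, p, u ++ x ++ v) (t ++ u, q, v)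
| gstep_jump (x y : seq Sigma) (p : gstate A) :
    x != [::] -> @no_factor Sigma A p y ->
    gstep (x, p, y) ([::], p, x ++ y).

Definition L_GRL (Sigma : finType) (A : grlowjfa Sigma) (w : seq Sigma) : Prop :=
  exists qf, qf \in gfinal A /\
    star (@gstep Sigma A) ([::], gstart A, w) ([::], qf, [::]).

Definition GRLOWJ (Sigma : finType) (L : seq Sigma -> Prop) : Prop :=
  exists A : grlowjfa Sigma, forall w, L w <-> L_GRL A w.

(* Nondeterministic one-tape TM whose tape holds the input between a left and a
   right endmarker, which it can neither overwrite nor move beyond.
   Tape alphabet ltape contains (an injective copy of) Sigma.
   ldeltaL p p' : at the left endmarker, go to p' and move right.
   ldeltaR p p' : at the right endmarker, go to p' and move left.
   ldelta p a p' b d : reading a, go to p', write b, move right if d else left. *)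
Record lba (Sigma : finType) := LBA {
  lstate : finType;
  ltape : finType;
  linput : Sigma -> ltape;
  linput_inj : injective linput;
  lstart : lstate;
  lacc : {set lstate};
  ldeltaL : lstate -> lstate -> bool;
  ldeltaR : lstate -> lstate -> bool;
  ldelta : lstate -> ltape -> lstate -> ltape -> bool -> bool
}.

(* configuration (state, tape contents, head position); position 0 is the left
   endmarker, positions 1..n the tape cells, position n+1 the right endmarker *)
Definition lconfig (Sigma : finType) (M : lba Sigma) : Type :=
  (lstate M * seq (ltape M) * nat)%type.

Inductive lstep (Sigma : finType) (M : lba Sigma) : lconfig M -> lconfig M -> Prop :=
| lstep_L (p p' : lstate M) tp :
    ldeltaL p p' -> lstep (p, tp, 0) (p', tp, 1)
| lstep_R (p p' : lstate M) tp :
    ldeltaR p p' -> lstep (p, tp, (size tp).+1) (p', tp, size tp)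
| lstep_T (p p' : lstate M) (t1 t2 : seq (ltape M)) (a b : ltape M) (d : bool) :
    ldelta p a p' b d ->
    lstep (p, t1 ++ a :: t2, (size t1).+1)
          (p', t1 ++ b :: t2, if d then (size t1).+2 else size t1).

Definition lba_accepts (Sigma : finType) (M : lba Sigma) (w : seq Sigma) : Prop :=
  exists (p : lstate M) (tp : seq (ltape M)) (i : nat), p \in lacc M /\
    star (@lstep Sigma M) (lstart M, map (linput M) w, 0) (p, tp, i).

Definition CS (Sigma : finType) (L : seq Sigma -> Prop) : Prop :=
  exists M : lba Sigma, forall w, L w <-> lba_accepts M w.

(* A linear bounded automaton can simulate a GRLOWJFA on its own input tape,
   overwriting deleted letters by a blank.  A left-to-right pass of the head
   follows the reading position of the GRLOWJFA: skipped letters stay on the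
   tape while the finite control keeps the last [K] of them ([K] the length of
   the longest rule word), which is all that the two side conditions on the
   skipped word depend on; applying a rule blanks its word, and returning the
   head to the left end realises a jump.  The input is accepted once a final
   state is reached on a blank tape.

   The inclusion is proper: the words of length [2 ^ k] over one letter are
   accepted by a linear bounded automaton that erases every second mark in
   each sweep.  Over one letter, however, a GRLOWJFA reading from the left
   end can only delete a prefix of the unread word, since a nonempty skipped
   word would contain or overlap the rule word.  Its accepting runs are thus
   runs of a finite automaton on prefixes, and pumping with a gap of at most
   [B = K + #|Q| * (K + 1)] yields an accepted length strictly between [2 ^ B]
   and [2 ^ B.+1]. *)

From HB Require Import structures.
From mathcomp Require Import all_boot zify.
From Stdlib Require Import ClassicalEpsilon.
Set Implicit Arguments. Unset Strict Implicit. Unset Printing Implicit Defensive.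

Section Star.
Variables (T : Type) (R : T -> T -> Prop).

Lemma star_trans x y z : star R x y -> star R y z -> star R x z.
Proof. by elim=> // a b c Rab _ IH /IH; apply: star_step. Qed.

Lemma star1 x y : R x y -> star R x y.
Proof. by move=> Rxy; apply: star_step Rxy (star_refl _ _). Qed.

Lemma star_inv (P : T -> Prop) :
  (forall x y, R x y -> P x -> P y) -> forall x y, star R x y -> P x -> P y.
Proof. by move=> PR x y; elim=> // a b c Rab _ IH /(PR _ _ Rab). Qed.

End Star.

Lemma star_sim (T U : Type) (R : T -> T -> Prop) (S : U -> U -> Prop)
    (sim : T -> U -> Prop) :
  (forall x y u, R x y -> sim x u -> exists2 v, star S u v & sim y v) ->
  forall x y u, star R x y -> sim x u -> exists2 v, star S u v & sim y v.
Proof.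
move=> simR x y u st; elim: st u => [z u sim_zu | a b c Rab _ IH u sim_au].
  by exists u => //; apply: star_refl.
have [v Suv sim_bv] := simR _ _ _ Rab sim_au.
have [w Svw sim_cw] := IH v sim_bv.
by exists w => //; apply: star_trans Suv Svw.
Qed.

Section RuleBound.
Variables (Sigma : finType) (A : grlowjfa Sigma).

Definition rule_bound : nat := \max_(r <- grules A) size r.1.2.

Lemma size_rule_word p x q : (p, x, q) \in grules A -> size x <= rule_bound.
Proof.
move=> r_pxq.
pose F (r : gstate A * seq Sigma * gstate A) := size r.1.2.
exact: (@leq_bigmax_seq _ _ xpredT F _ r_pxq).
Qed.

Lemma no_factor_nil (p : gstate A) : no_factor p [::].
Proof. by move=> w [q /grules_nonempty]; rewrite infixs0. Qed.

Lemma no_factor_catl (p : gstate A) u v : no_factor p (u ++ v) -> no_factor p u.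
Proof.
by move=> nf_uv w Sw; apply: contra (nf_uv w Sw); apply: infix_catr.
Qed.

End RuleBound.

Lemma no_overlap_nil (Sigma : finType) (x : seq Sigma) : no_overlap [::] x.
Proof. by case=> [u1 [[|? ?] [x1 [x2 []]]]] //; case: u1. Qed.

Lemma head_step_right (T : Type) (l r : seq T) b :
  (l ++ b :: r, (size l).+2) = ((l ++ [:: b]) ++ r, (size (l ++ [:: b])).+1).
Proof. by rewrite -catA size_cat addn1. Qed.

Lemma cat_nil_of_size (T : Type) (l r : seq T) : size (l ++ r) = size l -> r = [::].
Proof. by rewrite size_cat -{2}[size l]addn0 => /addnI /size0nil. Qed.

Lemma cat_at_inj (T : Type) (l r l' r' : seq T) :
  (l ++ r, (size l).+1) = (l' ++ r', (size l').+1) -> l = l' /\ r = r'.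
Proof.
case=> E eq_size; move: (congr1 (take (size l)) E) (congr1 (drop (size l)) E).
by rewrite (take_size_cat r erefl) (drop_size_cat r erefl) eq_size
  (take_size_cat r' erefl) (drop_size_cat r' erefl).
Qed.

Section LBARuns.
Variables (Sigma : finType) (M : lba Sigma).
Local Notation lrun := (star (@lstep Sigma M)).

Lemma lstep_right {s s' l r a b} : ldelta s a s' b true ->
  @lstep Sigma M (s, l ++ a :: r, (size l).+1)
                 (s', (l ++ [:: b]) ++ r, (size (l ++ [:: b])).+1).
Proof. by move=> step; rewrite -catA size_cat addn1; apply: lstep_T step. Qed.

Lemma lrun_sweep_left s : (forall a, ldelta s a s a false) ->
  forall tp i, i <= size tp -> lrun (s, tp, i) (s, tp, 0).
Proof.
move=> stay tp; elim=> [|i IH] lt_i; first exact: star_refl.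
apply: star_step (IH (ltnW lt_i)).
case: tp lt_i IH => // x0 tp0 lt_i _; set tp := x0 :: tp0 in lt_i *.
have := lstep_T (take i tp) (drop i.+1 tp) (stay (nth x0 tp i)).
by rewrite -drop_nth // cat_take_drop size_takel // ltnW.
Qed.

Lemma lrun_sweep_right s (P : pred (ltape M)) : (forall a, P a -> ldelta s a s a true) ->
  forall l r rest, all P r ->
  lrun (s, l ++ r ++ rest, (size l).+1) (s, (l ++ r) ++ rest, (size (l ++ r)).+1).
Proof.
move=> stay l r; elim: r l => [|a r IH] l rest /=; first by rewrite cats0 => _; apply: star_refl.
case/andP=> Pa Pr; apply: star_step (lstep_right (stay a Pa)) _.
by have := IH (l ++ [:: a]) rest Pr; rewrite -!catA.
Qed.

End LBARuns.

(** * A one-letter language that is not GRLOWJ *)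

Lemma eq_unit_seq (s s' : seq unit) : size s = size s' -> s = s'.
Proof. by elim: s s' => [|[] s IH] [|[] s'] //= [/IH ->]. Qed.

Section UnaryRuns.
Variable A : grlowjfa unit.
Local Notation K := (rule_bound A).
Local Notation run := (star (@gstep unit A)).

(* Over one letter, a nonempty skipped word [u] contains the rule word [x] if
   [x] is a single letter, and overlaps it otherwise. *)
Lemma gstep_unary_head p v g : gstep ([::], p, v) g ->
  exists x q v', [/\ (p, x, q) \in grules A, v = x ++ v' & g = ([::], q, v')].
Proof.
move E: ([::], p, v) => cfg st.
case: st E => [t u x v' p' q r_pxq nf_u no_ov | x y p' x_ne _] [Et Ep Ev]; last first.
  by move: x_ne; rewrite -Et.
subst t p' v; case: u nf_u no_ov => [|c u] nf_u no_ov; first by exists x, q, v'.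
case: x r_pxq no_ov => [|y [|y' x]] r_pxq no_ov.
- by have := grules_nonempty r_pxq.
- case/negP: (nf_u _ (ex_intro _ q r_pxq)).
  by rewrite (@eq_unit_seq [:: y] [:: c]) //; apply: prefix_infix.
- case: no_ov; exists (belast c u), [:: last c u], (y :: belast y' x), [:: last y' x].
  split=> //; rewrite ?cats1 /= -?lastI //.
  by apply: eq_unit_seq; rewrite /= size_belast.
Qed.

Lemma run_unary_catr p v q v' e : run ([::], p, v) ([::], q, v') ->
  run ([::], p, v ++ e) ([::], q, v' ++ e).
Proof.
move E: ([::], p, v) => c; move E': ([::], q, v') => c' st.
elim: st p v E E' => [c0 | c0 c1 c2 st01 _ IH] p v E E'.
  by rewrite -E in E'; case: E' => -> ->; apply: star_refl.
rewrite -E in st01; have [x [q1 [v1 [r_x -> E1]]]] := gstep_unary_head st01.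
apply: star_step (IH _ _ (esym E1) E'); rewrite -catA.
exact: (gstep_rule [::] (v1 ++ e) r_x (@no_factor_nil _ A p) (@no_overlap_nil _ x)).
Qed.

(* Each step deletes at most [K] letters. *)
Lemma run_unary_level p v qf L : run ([::], p, v) ([::], qf, [::]) -> L <= size v ->
  exists q v', [/\ size v' <= L <= size v' + K,
    run ([::], p, v) ([::], q, v') & run ([::], q, v') ([::], qf, [::])].
Proof.
move E: ([::], p, v) => c; move E': ([::], qf, [::]) => c' st.
elim: st p v E E' => [c0 | c0 c1 c2 st01 st12 IH] p v E E' le_Lv; subst c0.
  case: E' => <- Ev; move: le_Lv; rewrite -Ev leqn0 => /eqP->.
  by exists qf, [::]; split=> //; apply: star_refl.
have [x [q1 [v1 [r_x Ev E1]]]] := gstep_unary_head st01; subst c1 c2.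
have [le_Lv1 | lt_v1L] := leqP L (size v1).
  have [q [v' [lev run1 run2]]] := IH _ _ erefl erefl le_Lv1.
  by exists q, v'; split=> //; apply: star_step run1.
exists q1, v1; split=> //; first rewrite (ltnW lt_v1L) (leq_trans le_Lv) //.
  by rewrite Ev size_cat addnC leq_add2l (size_rule_word r_x).
exact: star1.
Qed.

Lemma ord_pigeonhole (T : finType) n (f : 'I_n.+1 -> T) :
  #|T| <= n -> exists i j : 'I_n.+1, i < j /\ f i = f j.
Proof.
move=> le_Tn; have /injectivePn[i [j neq_ij eq_f]] : ~~ injectiveb f.
  by apply/injectiveP => /leq_card; rewrite card_ord leqNgt ltnS le_Tn.
case: (ltngtP i j) => [lt_ij | lt_ji | /val_inj eq_ij]; first by exists i, j.
  by exists j, i.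
by rewrite eq_ij eqxx in neq_ij.
Qed.

(* Two of the levels [K + j * K.+1], [j <= #|gstate A|], are passed in the
   same state; adding to the input the [d] letters read between them leads
   from the first to the second. *)
Lemma unary_pumping : exists B, forall n, B <= n -> L_GRL A (nseq n tt) ->
  exists2 d, 0 < d <= B & L_GRL A (nseq (n + d) tt).
Proof.
pose N := #|gstate A|; exists (K + N * K.+1) => n le_Bn [qf [qf_final acc]].
have level (j : 'I_N.+1) : exists qv : gstate A * seq unit,
    [/\ size qv.2 <= K + j * K.+1 <= size qv.2 + K,
        run ([::], gstart A, nseq n tt) ([::], qv.1, qv.2)
      & run ([::], qv.1, qv.2) ([::], qf, [::])].
  have [|q [v [? ? ?]]] := run_unary_level (L := K + j * K.+1) acc; last by exists (q, v).
  by rewrite size_nseq; apply: leq_trans le_Bn; have := ltn_ord j; nia.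
have [f Hf] := fin_all_exists level.
have [i [j [lt_ij same_q]]] := ord_pigeonhole (fun j => (f j).1) (leqnn _).
have [lev_i run_i _] := Hf i; have [lev_j _ run_j] := Hf j.
have lt_jN := ltn_ord j.
have lt_vij : size (f i).2 < size (f j).2 by move: lev_i lev_j lt_ij; nia.
exists (size (f j).2 - size (f i).2).
  by rewrite subn_gt0 lt_vij /=; move: lev_j lt_jN; nia.
exists qf; split=> //; rewrite nseqD.
apply: star_trans (run_unary_catr (nseq _ tt) run_i) _.
suff -> : (f i).2 ++ nseq (size (f j).2 - size (f i).2) tt = (f j).2 by rewrite same_q.
by apply: eq_unit_seq; rewrite size_cat size_nseq subnKC // ltnW.
Qed.

End UnaryRuns.

Definition pow2_words (w : seq unit) : Prop := exists k, size w = 2 ^ k.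

Lemma pow2_words_not_GRLOWJ : ~ GRLOWJ pow2_words.
Proof.
case=> A accA; have [B pumpB] := unary_pumping A.
have ltB2B : B < 2 ^ B by apply: ltn_expl.
have [|d /andP[d_gt0 le_dB]] := pumpB (2 ^ B) (ltnW ltB2B).
  by apply/accA; exists B; rewrite size_nseq.
move/accA => [k]; rewrite size_nseq => eq_k.
have ltBk : B < k by rewrite -(@ltn_exp2l 2) // -eq_k; lia.
have : 2 ^ B.+1 <= 2 ^ k by rewrite leq_exp2l.
by rewrite expnS -eq_k; lia.
Qed.

(** * The powers of two form a context-sensitive language *)

(* [HSweep par big]: sweeping right, [par] is the parity of the marks passed
   so far and [big] records that a mark was erased; every second mark is
   erased, so a sweep halves an even number of marks.  A sweep that met a
   single mark accepts, one that met an even positive number starts over. *)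
Inductive halving_state := HBack | HSweep of bool & bool | HAccept.

Definition halving_encode (s : halving_state) : option (option (bool * bool)) :=
  match s with
  | HBack => Some None
  | HSweep par big => Some (Some (par, big))
  | HAccept => None
  end.

Definition halving_decode (x : option (option (bool * bool))) : halving_state :=
  match x with
  | Some None => HBack
  | Some (Some (par, big)) => HSweep par big
  | None => HAccept
  end.

Lemma halving_encodeK : cancel halving_encode halving_decode.
Proof. by case. Qed.

HB.instance Definition _ := Finite.copy halving_state (can_type halving_encodeK).

Definition halving_left (s s' : halving_state) : bool :=
  (s == HBack) && (s' == HSweep false false).

Definition halving_right (s s' : halving_state) : bool :=
  ((s == HSweep true false) && (s' == HAccept)) ||
  ((s == HSweep false true) && (s' == HBack)).

Definition halving_cell (s : halving_state) (a : bool) (s' : halving_state)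
    (b : bool) (right : bool) : bool :=
  match s with
  | HBack => [&& s' == HBack, b == a & ~~ right]
  | HSweep par big => right &&
      if a then
        if par then ~~ b && (s' == HSweep false true)
        else b && (s' == HSweep true big)
      else ~~ b && (s' == s)
  | HAccept => false
  end.

Definition mark (_ : unit) : bool := true.

Lemma mark_inj : injective mark. Proof. by case; case. Qed.

Definition halving_lba : lba unit :=
  LBA mark_inj HBack [set HAccept] halving_left halving_right halving_cell.

(* During a sweep, [a] marks have been erased left of the head, so these
   cells held [2a + par] marks before the sweep. *)
Definition halving_inv (n : nat) (c : lconfig halving_lba) : Prop :=
  let: (s, tp, i) := c in
  match s with
  | HBack => exists j, count id tp * 2 ^ j = n
  | HSweep par big => exists l r a j,
      [/\ (tp, i) = (l ++ r, (size l).+1), count id l = a + par, big = (0 < a)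
        & (a.*2 + par + count id r) * 2 ^ j = n]
  | HAccept => exists k, n = 2 ^ k
  end.

Lemma halving_inv_step n c c' : lstep c c' -> halving_inv n c -> halving_inv n c'.
Proof.
case=> [s s' tp | s s' tp | s s' t1 t2 a b right].
- case/andP=> /eqP-> /eqP-> /= [j count_j].
  by exists [::], tp, 0, j.
- case/orP=> /andP[/eqP-> /eqP->] /= [l [r [a [j [[Etp Ei] count_l big_a count_r]]]]];
    move: Ei; rewrite Etp => /cat_nil_of_size Er; subst r tp.
  + by exists j; move: big_a count_l count_r; case: a => //= _ _; rewrite mul1n.
  + by exists j.+1; rewrite cats0 count_l expnS -count_r /= -muln2; lia.
- case: s => [|par big|] //=.
  + by case/and3P=> /eqP-> /eqP-> _ [j count_j]; exists j.
  + move=> step [l [r [a' [j [/cat_at_inj[<- <-] count_l big_a count_r]]]]].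
    case/andP: step => -> step; rewrite head_step_right.
    move: step count_r; case: a; case: par count_l; case: b => count_l //= /eqP-> count_r.
    * exists (t1 ++ [:: false]), t2, a'.+1, j; rewrite count_cat /=; split=> //; lia.
    * exists (t1 ++ [:: true]), t2, a', j; rewrite count_cat /=; split=> //; lia.
    * exists (t1 ++ [:: false]), t2, a', j; rewrite count_cat /=; split=> //; lia.
    * exists (t1 ++ [:: false]), t2, a', j; rewrite count_cat /=; split=> //; lia.
Qed.

Local Notation halving_run := (star (@lstep unit halving_lba)).

Lemma halving_sweep r l par a : exists r' par' a',
  [/\ halving_run (HSweep par (0 < a), l ++ r, (size l).+1)
                  (HSweep par' (0 < a'), l ++ r', (size (l ++ r')).+1),
      a'.*2 + par' = a.*2 + par + count id r
    & count id r' + a + par = a' + par'].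
Proof.
elim: r l par a => [|x r IH] l par a.
  by exists [::], par, a; rewrite cats0 addn0; split=> //; apply: star_refl.
have step : @ldelta _ halving_lba (HSweep par (0 < a)) x
    (HSweep (par (+) x) (0 < a + (x && par))) (x && ~~ par) true.
  by case: x par => [] [] /=; rewrite ?addn0 ?addn1 ?eqxx.
have [r' [par' [a' [run_r eq_a eq_c]]]] :=
  IH (l ++ [:: x && ~~ par]) (par (+) x) (a + (x && par)).
exists ((x && ~~ par) :: r'), par', a'; split.
- by apply: star_step (lstep_right step) _; rewrite -!catA in run_r *.
- by rewrite eq_a; case: x par {step run_r eq_a eq_c} => [] [] /=; lia.
- by rewrite /= -eq_c; case: x par {step run_r eq_a eq_c} => [] [] /=; lia.
Qed.

Lemma halving_pass tp : exists r' par' a',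
  [/\ halving_run (HBack, tp, 0) (HSweep par' (0 < a'), r', (size r').+1),
      a'.*2 + par' = count id tp & count id r' = a' + par'].
Proof.
have [r' [par' [a' [run_r eq_a eq_c]]]] := halving_sweep tp [::] false 0.
exists r', par', a'; split; rewrite -?eq_c ?eq_a ?addn0 //.
exact: star_step (@lstep_L _ halving_lba HBack (HSweep false false) tp isT) run_r.
Qed.

Lemma halving_accepts k tp : count id tp = 2 ^ k ->
  exists tp' i, halving_run (HBack, tp, 0) (HAccept, tp', i).
Proof.
elim: k tp => [|k IH] tp count_tp;
  have [r' [par' [a' [run eq_a eq_c]]]] := halving_pass tp.
- have [Ea Ep] : a' = 0 /\ par' = true.
    by rewrite count_tp in eq_a; case: par' eq_a {run eq_c}; lia.
  subst a' par'.
  exists r', (size r'); apply: star_trans run (star1 _).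
  exact: (@lstep_R _ halving_lba (HSweep true false) HAccept r' isT).
- have [Ea Ep] : a' = 2 ^ k /\ par' = false.
    by rewrite count_tp expnS in eq_a; case: par' eq_a {run eq_c}; lia.
  subst a' par'.
  have [|tp' [i run']] := IH r'; first by rewrite eq_c addn0.
  exists tp', i; apply: star_trans run _; rewrite expn_gt0.
  apply: star_step (@lstep_R _ halving_lba (HSweep false true) HBack r' isT) _.
  by apply: star_trans run'; apply: lrun_sweep_left => // b; rewrite /= !eqxx.
Qed.

Lemma count_map_mark (w : seq unit) : count id (map mark w) = size w.
Proof. by elim: w => //= _ w ->. Qed.

Lemma pow2_words_CS : CS pow2_words.
Proof.
exists halving_lba => w; split.
- case=> k size_w; have [tp [i run]] := halving_accepts (etrans (count_map_mark w) size_w).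
  by exists HAccept, tp, i; rewrite inE.
- case=> s [tp [i [/set1P-> run]]].
  apply: (star_inv (@halving_inv_step (size w)) run).
  by exists 0; rewrite muln1 count_map_mark.
Qed.

(** * Simulating a GRLOWJFA by a linear bounded automaton *)

Definition classic_bool (P : Prop) : bool :=
  if excluded_middle_informative P then true else false.

Lemma classic_boolP (P : Prop) : reflect P (classic_bool P).
Proof. by rewrite /classic_bool; case: excluded_middle_informative => H; constructor. Qed.

Definition lastn (T : Type) (k : nat) (s : seq T) : seq T := drop (size s - k) s.

Lemma size_lastn (T : Type) k (s : seq T) : size (lastn k s) <= k.
Proof. by rewrite size_drop; lia. Qed.

Lemma lastn_oversize (T : Type) k (s : seq T) : size s <= k -> lastn k s = s.
Proof. by move=> le_sk; rewrite /lastn (_ : size s - k = 0) ?drop0 //; lia. Qed.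

Lemma drop_catl (T : Type) n (s1 s2 : seq T) :
  n <= size s1 -> drop n (s1 ++ s2) = drop n s1 ++ s2.
Proof.
by rewrite drop_cat leq_eqVlt => /orP[/eqP-> | ->]; rewrite ?ltnn ?subnn ?drop0 ?drop_size.
Qed.

Lemma lastn_cat (T : Type) k (s w : seq T) :
  size w <= k -> lastn k (s ++ w) = lastn (k - size w) s ++ w.
Proof.
move=> le_wk; rewrite /lastn size_cat drop_catl; last by lia.
by congr (drop _ _ ++ _); lia.
Qed.

Lemma lastn_lastn (T : Type) k m (s : seq T) : k <= m -> lastn k (lastn m s) = lastn k s.
Proof.
move=> le_km; have [le_sm | lt_ms] := leqP (size s) m; first by rewrite (lastn_oversize le_sm).
by rewrite /lastn drop_drop size_drop; congr drop; lia.
Qed.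

Lemma lastn_snoc (T : Type) k (u : seq T) c :
  lastn k (lastn k u ++ [:: c]) = lastn k (u ++ [:: c]).
Proof.
have <- : lastn k.+1 (u ++ [:: c]) = lastn k u ++ [:: c] by rewrite lastn_cat // subn1.
exact: lastn_lastn.
Qed.

Lemma no_overlap_lastn (Sigma : finType) k (u x : seq Sigma) :
  no_overlap u x -> no_overlap (lastn k u) x.
Proof.
move=> ov [u1 [u2 [x1 [x2 [Eu Ex u2_ne x1_ne Ex']]]]]; apply: ov.
exists (take (size u - k) u ++ u1), u2, x1, x2; split=> //.
by rewrite -catA -Eu cat_take_drop.
Qed.

(* An overlap of [u] with [x] lies within the last [size x] letters of [u]. *)
Lemma no_overlap_of_lastn (Sigma : finType) k (u x : seq Sigma) :
  size x <= k -> no_overlap (lastn k u) x -> no_overlap u x.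
Proof.
move=> le_xk ov [u1 [u2 [x1 [x2 [Eu Ex u2_ne x1_ne Ex']]]]]; apply: ov.
exists (drop (size u - k) u1), u2, x1, x2; split=> //.
have lt_u2x : size u2 < size x.
  rewrite -Ex' size_cat; have : size x1 <> 0 by move/size0nil.
  lia.
by rewrite /lastn Eu drop_catl // size_cat; lia.
Qed.

Section NoFactor.
Variables (Sigma : finType) (A : grlowjfa Sigma).

Lemma no_factor_snoc_lastn (p : gstate A) k u c :
  no_factor p (u ++ [:: c]) -> no_factor p (lastn k u ++ [:: c]).
Proof.
move=> nf w Sw; apply: contra (nf w Sw) => /infix_trans; apply.
by rewrite -{2}(cat_take_drop (size u - k) u) -catA; apply: suffix_infix.
Qed.

(* A new factor created by appending [c] is a suffix of [u ++ [:: c]] no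
   longer than [rule_bound A]. *)
Lemma no_factor_snoc (p : gstate A) u c : no_factor p u ->
  no_factor p (lastn (rule_bound A) u ++ [:: c]) -> no_factor p (u ++ [:: c]).
Proof.
move=> nf_u nf_c w Sw; apply/negP => /infixP[s1 [s3 E]].
have le_wK : size w <= rule_bound A by case: Sw => q /size_rule_word.
case/lastP: s3 E => [|s3 y]; rewrite ?cats0 => E.
- case/negP: (nf_c w Sw).
  have <- : lastn (rule_bound A).+1 (u ++ [:: c]) = lastn (rule_bound A) u ++ [:: c].
    by rewrite lastn_cat // subn1.
  by rewrite E lastn_cat ?suffix_infix // ltnW.
- case/negP: (nf_u w Sw); apply/infixP; exists s1, s3.
  by move: E; rewrite -cats1 !catA !cats1 => /rcons_inj[-> _]; rewrite -!catA.
Qed.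

End NoFactor.

Fixpoint words_upto (T : finType) (n : nat) : seq (seq T) :=
  if n is n'.+1 then [::] :: [seq a :: w | a <- enum T, w <- words_upto T n']
  else [:: [::]].

Lemma mem_words_upto (T : finType) n (w : seq T) : size w <= n -> w \in words_upto T n.
Proof.
elim: n w => [|n IH] [|a w] //= le_wn; rewrite inE ?eqxx //.
by apply/orP; right; apply: (allpairs_f (fun a w => a :: w)); rewrite ?mem_enum ?IH.
Qed.

Definition live (T : Type) (tp : seq (option T)) : seq T := pmap id tp.

Lemma live_cat (T : Type) (s1 s2 : seq (option T)) : live (s1 ++ s2) = live s1 ++ live s2.
Proof. exact: pmap_cat. Qed.

Lemma live_map_Some (T : Type) (w : seq T) : live (map Some w) = w.
Proof. by elim: w => //= a w ->. Qed.

Lemma live_blank (T : eqType) (r : seq (option T)) : live r = [::] -> all (pred1 None) r.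
Proof. by elim: r => [|[a|] r IH] //= /IH. Qed.

Lemma live_split (T : Type) (r : seq (option T)) s1 c s2 : live r = s1 ++ c :: s2 ->
  exists r1 r2, [/\ r = r1 ++ Some c :: r2, live r1 = s1 & live r2 = s2].
Proof.
elim: r s1 => [|[a|] r IH] s1 /=; first by case: s1.
- case: s1 => [|b s1] /= [-> E]; first by exists [::], r.
  by have [r1 [r2 [-> <- <-]]] := IH _ E; exists (Some b :: r1), r2.
- by move/IH => [r1 [r2 [-> <- <-]]]; exists (None :: r1), r2.
Qed.

Section Simulation.
Variables (Sigma : finType) (A : grlowjfa Sigma).
Local Notation K := (rule_bound A).
Local Notation run := (star (@gstep Sigma A)).

Definition buffer : finType := seq_sub (words_upto Sigma K).

Definition buf (s : seq Sigma) : buffer := SeqSub (mem_words_upto (size_lastn K s)).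

Lemma buf_snoc u c : buf (val (buf u) ++ [:: c]) = buf (u ++ [:: c]).
Proof. by apply: val_inj; rewrite /= lastn_snoc. Qed.

(* [Scan p b]: the automaton reads in state [p], and [b] holds the last [K]
   letters skipped since its last rule application or jump; [Del q d]: the
   remaining letters [d] of a rule word are being blanked, after which the
   state is [q]; [Ret p]: the head returns to the left end, realising a jump;
   [Chk p]: the head checks that the tape is blank. *)
Inductive sim_state :=
  Scan of gstate A & buffer | Del of gstate A & buffer | Ret of gstate A
| Chk of gstate A | Acc.

Definition sim_encode (s : sim_state) :
    (gstate A * buffer) + (gstate A * buffer) + gstate A + gstate A + unit :=
  match s with
  | Scan p b => inl (inl (inl (inl (p, b))))
  | Del q d => inl (inl (inl (inr (q, d))))
  | Ret p => inl (inl (inr p))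
  | Chk p => inl (inr p)
  | Acc => inr tt
  end.

Definition sim_decode
    (x : (gstate A * buffer) + (gstate A * buffer) + gstate A + gstate A + unit) :
    sim_state :=
  match x with
  | inl (inl (inl (inl (p, b)))) => Scan p b
  | inl (inl (inl (inr (q, d)))) => Del q d
  | inl (inl (inr p)) => Ret p
  | inl (inr p) => Chk p
  | inr _ => Acc
  end.

Lemma sim_encodeK : cancel sim_encode sim_decode.
Proof. by case. Qed.

HB.instance Definition _ := Finite.copy sim_state (can_type sim_encodeK).

Definition after (q : gstate A) (x : seq Sigma) : sim_state :=
  if x is [::] then Scan q (buf [::]) else Del q (buf x).

Definition sim_cell (s : sim_state) (a : option Sigma) (s' : sim_state)
    (b : option Sigma) (right : bool) : Prop :=
  match s with
  | Scan p bu => right /\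
      [\/ [/\ a = None, b = None & s' = s],
          exists c, [/\ a = Some c, b = Some c, no_factor p (val bu ++ [:: c])
                      & s' = Scan p (buf (val bu ++ [:: c]))]
        | exists c x q, [/\ a = Some c, b = None, (p, c :: x, q) \in grules A,
                          no_overlap (val bu) (c :: x) & s' = after q x]]
  | Del q d => right /\
      ([/\ a = None, b = None & s' = s] \/
       exists c x, [/\ val d = c :: x, a = Some c, b = None & s' = after q x])
  | Ret p => [/\ ~~ right, b = a & s' = s]
  | Chk p => [/\ right, a = None, b = None & s' = s]
  | Acc => False
  end.

Definition sim_left (s s' : sim_state) : Prop :=
  if s is Ret p then s' = Scan p (buf [::]) \/ s' = Chk p else False.

Definition sim_right (s s' : sim_state) : Prop :=
  match s with
  | Scan p _ => s' = Ret p
  | Chk p => p \in gfinal A /\ s' = Acc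
  | _ => False
  end.

Definition sim_lba : lba Sigma :=
  @LBA Sigma sim_state (option Sigma) Some Some_inj (Ret (gstart A)) [set Acc]
    (fun s s' => classic_bool (sim_left s s'))
    (fun s s' => classic_bool (sim_right s s'))
    (fun s a s' b right => classic_bool (sim_cell s a s' b right)).

Local Notation lrun := (star (@lstep Sigma sim_lba)).

(* In [Scan p bu], of the live letters left of the head, [t] precede the
   reading position of the automaton and [u] have been skipped since; in
   [Del q d], [x] is the already blanked part of the rule word. *)
Definition sim_rel (c : lconfig sim_lba) (g : gconfig A) : Prop :=
  let: (s, tp, i) := c in
  match s with
  | Scan p bu => exists l r t u,
      [/\ (tp, i) = (l ++ r, (size l).+1), g = (t, p, u ++ live r),
          t ++ u = live l, no_factor p u & val bu = lastn K u]
  | Del q d => exists l r t u p x,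
      [/\ (tp, i) = (l ++ r, (size l).+1), g = (t, p, u ++ x ++ live r),
          t ++ u = live l, no_factor p u
        & (p, x ++ val d, q) \in grules A /\ no_overlap u (x ++ val d)]
  | Ret p => g = ([::], p, live tp)
  | Chk p => g = ([::], p, live tp) /\
      exists l r, (tp, i) = (l ++ r, (size l).+1) /\ live l = [::]
  | Acc => exists2 qf, qf \in gfinal A & g = ([::], qf, [::])
  end.

Lemma run_jump t p u : no_factor p u -> run (t, p, u) ([::], p, t ++ u).
Proof.
case: t => [|a t] nf_u; first exact: star_refl.
exact/star1/gstep_jump.
Qed.

Lemma sim_rel_after t1 t2 t u p x c y q :
  t ++ u = live t1 -> no_factor p u -> (p, x ++ c :: y, q) \in grules A ->
  no_overlap u (x ++ c :: y) ->
  exists2 g, run (t, p, u ++ x ++ c :: live t2) g &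
    sim_rel (after q y, t1 ++ None :: t2, (size t1).+2) g.
Proof.
move=> tu nf_u r_x ov; case: y r_x ov => [|b y] r_x ov /=.
  exists (t ++ u, q, live t2).
    by apply: star1; have := gstep_rule t (live t2) r_x nf_u ov; rewrite -catA.
  exists (t1 ++ [:: None]), t2, (t ++ u), [::].
  by rewrite head_step_right live_cat -tu cats0; split=> //; apply: no_factor_nil.
exists (t, p, u ++ x ++ c :: live t2); first exact: star_refl.
have le_yK : size (b :: y) <= K.
  by have := size_rule_word r_x; rewrite size_cat /=; lia.
exists (t1 ++ [:: None]), t2, t, u, p, (x ++ [:: c]).
by rewrite head_step_right live_cat cats0 /= lastn_oversize // -!catA.
Qed.

Lemma sim_scan_cell p bu a s' b right t1 t2 g :
  sim_cell (Scan p bu) a s' b right ->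
  sim_rel (Scan p bu, t1 ++ a :: t2, (size t1).+1) g ->
  exists2 g', run g g' &
    sim_rel (s', t1 ++ b :: t2, if right then (size t1).+2 else size t1) g'.
Proof.
case=> -> step [l [r [t [u [/cat_at_inj[<- <-] -> tu nf_u bu_u]]]]].
case: step => [[-> -> ->] | [c [-> -> nf_c ->]] | [c [x [q [-> -> r_x ov ->]]]]].
- exists (t, p, u ++ live t2); first exact: star_refl.
  exists (t1 ++ [:: None]), t2, t, u.
  by rewrite head_step_right live_cat cats0.
- exists (t, p, u ++ c :: live t2); first exact: star_refl.
  exists (t1 ++ [:: Some c]), t2, t, (u ++ [:: c]).
  rewrite head_step_right live_cat /= -tu bu_u lastn_snoc; split; rewrite -?catA //.
  by apply: no_factor_snoc; rewrite -?bu_u.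
- apply: (@sim_rel_after t1 t2 t u p [::] c x q) => //.
  by apply: no_overlap_of_lastn (size_rule_word r_x) _; rewrite -bu_u.
Qed.

Lemma sim_del_cell q d a s' b right t1 t2 g :
  sim_cell (Del q d) a s' b right ->
  sim_rel (Del q d, t1 ++ a :: t2, (size t1).+1) g ->
  exists2 g', run g g' &
    sim_rel (s', t1 ++ b :: t2, if right then (size t1).+2 else size t1) g'.
Proof.
case=> -> step [l [r [t [u [p [x [/cat_at_inj[<- <-] -> tu nf_u [r_x ov]]]]]]]].
case: step => [[-> -> ->] | [c [y [dE -> -> ->]]]].
- exists (t, p, u ++ x ++ live t2); first exact: star_refl.
  exists (t1 ++ [:: None]), t2, t, u, p, x.
  by rewrite head_step_right live_cat cats0.
- by rewrite dE in r_x ov; apply: sim_rel_after.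
Qed.

Lemma sim_rel_cell s a s' b right t1 t2 g :
  sim_cell s a s' b right ->
  sim_rel (s, t1 ++ a :: t2, (size t1).+1) g ->
  exists2 g', run g g' &
    sim_rel (s', t1 ++ b :: t2, if right then (size t1).+2 else size t1) g'.
Proof.
case: s => [p bu | q d | p | p |] //; [exact: sim_scan_cell | exact: sim_del_cell | |].
- by case=> /negbTE-> -> -> rel; exists g => //; apply: star_refl.
- case=> -> -> -> -> [-> [l [r [/cat_at_inj[<- _] blank]]]].
  exists ([::], p, live (t1 ++ None :: t2)); first exact: star_refl.
  split=> //; exists (t1 ++ [:: None]), t2.
  by rewrite head_step_right live_cat blank.
Qed.

Lemma sim_rel_left s s' tp g :
  sim_left s s' -> sim_rel (s, tp, 0) g -> sim_rel (s', tp, 1) g.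
Proof.
case: s => // p [->|->] ->; last by split=> //; exists [::], tp.
by exists [::], tp, [::], [::]; split=> //; apply: no_factor_nil.
Qed.

Lemma sim_rel_right s s' tp g : sim_right s s' ->
  sim_rel (s, tp, (size tp).+1) g -> exists2 g', run g g' & sim_rel (s', tp, size tp) g'.
Proof.
case: s => // [p bu | p] /=.
- move=> -> [l [r [t [u [[Etp]]]]]]; rewrite Etp => /cat_nil_of_size Er.
  subst r tp => -> tu nf_u _; rewrite /= !cats0 -tu.
  by exists ([::], p, t ++ u) => //; apply: run_jump.
- move=> [final_p ->] [-> [l [r [[Etp]]]]]; rewrite Etp => /cat_nil_of_size Er.
  subst r tp; rewrite cats0 => blank.
  by exists ([::], p, live l); [apply: star_refl | exists p; rewrite ?blank].
Qed.

Lemma sim_rel_lstep c c' g : lstep c c' -> sim_rel c g ->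
  exists2 g', run g g' & sim_rel c' g'.
Proof.
case=> [s s' tp | s s' tp | s s' t1 t2 a b right] /classic_boolP step.
- by move=> rel; exists g; [apply: star_refl | apply: sim_rel_left step rel].
- exact: sim_rel_right step.
- exact: sim_rel_cell step.
Qed.

Lemma sim_lba_sound w : lba_accepts sim_lba w -> L_GRL A w.
Proof.
case=> s [tp [i [/set1P-> acc]]].
have start : sim_rel (Ret (gstart A), map Some w, 0) ([::], gstart A, w).
  by rewrite /= live_map_Some.
by have [g run_g [qf final_qf Eg]] := star_sim sim_rel_lstep acc start; exists qf; rewrite -Eg.
Qed.

Local Notation cell := (@ldelta Sigma sim_lba).

Lemma lrun_scan p u l r1 r2 : no_factor p (u ++ live r1) ->
  lrun (Scan p (buf u), l ++ r1 ++ r2, (size l).+1)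
       (Scan p (buf (u ++ live r1)), (l ++ r1) ++ r2, (size (l ++ r1)).+1).
Proof.
elim: r1 l u => [|[c|] r1 IH] l u /= nf.
- by rewrite !cats0; apply: star_refl.
- have step : cell (Scan p (buf u)) (Some c) (Scan p (buf (u ++ [:: c]))) (Some c) true.
    apply/classic_boolP; split=> //; apply: Or32; exists c; split=> //; last by rewrite buf_snoc.
    by apply/no_factor_snoc_lastn/(@no_factor_catl _ _ _ _ (live r1)); rewrite -catA.
  apply: star_step (lstep_right step) _.
  by have := IH (l ++ [:: Some c]) (u ++ [:: c]); rewrite -!catA; apply.
- have step : cell (Scan p (buf u)) None (Scan p (buf u)) None true.
    by apply/classic_boolP; split=> //; apply: Or31.
  apply: star_step (lstep_right step) _.
  by have := IH (l ++ [:: None]) u nf; rewrite -!catA.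
Qed.

Lemma lrun_return p bu tp : lrun (Scan p bu, tp, (size tp).+1) (Ret p, tp, 0).
Proof.
apply: star_step (@lstep_R _ sim_lba (Scan p bu) (Ret p) tp _) _; first exact/classic_boolP.
by apply: lrun_sweep_left => // a; apply/classic_boolP.
Qed.

Lemma lrun_after q x l r v : size x <= K -> live r = x ++ v ->
  exists l' r', [/\ lrun (after q x, l ++ r, (size l).+1)
                         (Scan q (buf [::]), l' ++ r', (size l').+1),
                    live l' = live l & live r' = v].
Proof.
elim: x l r => [|y x IH] l r le_xK live_r; first by exists l, r; split=> //; apply: star_refl.
have [r1 [r2 [-> blank_r1 live_r2]]] := live_split (s1 := [::]) live_r.
have [|l' [r' [run' live_l' live_r']]] := IH ((l ++ r1) ++ [:: None]) r2 _ live_r2.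
  exact: ltnW.
exists l', r'; split=> //; first last.
  by rewrite live_l' !live_cat blank_r1 !cats0.
have skip a : pred1 None a -> cell (Del q (buf (y :: x))) a (Del q (buf (y :: x))) a true.
  by move/eqP->; apply/classic_boolP; split=> //; left.
have sweep := lrun_sweep_right (M := sim_lba) skip l (Some y :: r2) (live_blank blank_r1).
apply: star_trans sweep _.
have step : cell (Del q (buf (y :: x))) (Some y) (after q x) None true.
  by apply/classic_boolP; split=> //; right; exists y, x; rewrite /= lastn_oversize.
exact: star_step (lstep_right step) run'.
Qed.

Lemma lrun_rule p x q u v l r : (p, x, q) \in grules A -> no_factor p u ->
  no_overlap u x -> live r = u ++ x ++ v ->
  exists l' r', [/\ lrun (Scan p (buf [::]), l ++ r, (size l).+1)
                         (Scan q (buf [::]), l' ++ r', (size l').+1),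
                    live l' = live l ++ u & live r' = v].
Proof.
case: x => [/grules_nonempty // | c x] r_x nf_u ov live_r.
have [r1 [r2 [-> live_r1 live_r2]]] := live_split live_r.
have [|l' [r' [run' live_l' live_r']]] := lrun_after q ((l ++ r1) ++ [:: None]) _ live_r2.
  by have := size_rule_word r_x; rewrite /=; lia.
exists l', r'; split=> //; last by rewrite live_l' !live_cat live_r1 cats0.
have nf : no_factor p ([::] ++ live r1) by rewrite live_r1.
apply: star_trans (lrun_scan l (Some c :: r2) nf) _.
have step : cell (Scan p (buf ([::] ++ live r1))) (Some c) (after q x) None true.
  apply/classic_boolP; split=> //; apply: Or33; exists c, x, q; split=> //.
  by rewrite live_r1; apply: no_overlap_lastn.
exact: star_step (lstep_right step) run'.
Qed.

Lemma lrun_jump p l r : no_factor p (live r) ->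
  lrun (Scan p (buf [::]), l ++ r, (size l).+1) (Scan p (buf [::]), l ++ r, 1).
Proof.
move=> nf; have := lrun_scan (u := [::]) l [::] nf; rewrite !cats0 => scan.
apply: star_trans scan (star_trans (lrun_return _ _ _) (star1 _)).
by apply: lstep_L; apply/classic_boolP; left.
Qed.

Lemma lrun_accept qf l r : qf \in gfinal A -> live l = [::] -> live r = [::] ->
  exists tp i, lrun (Scan qf (buf [::]), l ++ r, (size l).+1) (Acc, tp, i).
Proof.
move=> final_qf blank_l blank_r; exists (l ++ r), (size (l ++ r)).
have nf : no_factor qf ([::] ++ live r) by rewrite blank_r; apply: no_factor_nil.
have := lrun_scan l [::] nf; rewrite blank_r !cats0 => scan.
apply: star_trans scan (star_trans (lrun_return _ _ _) _).
apply: star_step (@lstep_L _ sim_lba (Ret qf) (Chk qf) (l ++ r) _) _.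
  by apply/classic_boolP; right.
have skip a : pred1 None a -> cell (Chk qf) a (Chk qf) a true.
  by move/eqP->; apply/classic_boolP.
have blank : all (pred1 None) (l ++ r) by rewrite all_cat !live_blank.
have := lrun_sweep_right (M := sim_lba) skip [::] [::] blank; rewrite /= !cats0 => sweep.
apply: star_trans sweep (star1 _).
by apply: lstep_R; apply/classic_boolP.
Qed.

Definition sim_config (g : gconfig A) (c : lconfig sim_lba) : Prop :=
  let: (t, p, v) := g in exists l r,
    [/\ c = (Scan p (buf [::]), l ++ r, (size l).+1), live l = t & live r = v].

Lemma sim_config_gstep g g' c : gstep g g' -> sim_config g c ->
  exists2 c', lrun c c' & sim_config g' c'.
Proof.
case=> [t u x v p q r_x nf_u ov | x y p x_ne nf_y] [l [r [-> live_l live_r]]].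
- have [l' [r' [run' live_l' live_r']]] := lrun_rule l r_x nf_u ov live_r.
  exists (Scan q (buf [::]), l' ++ r', (size l').+1) => //.
  by exists l', r'; rewrite live_l' live_l.
- exists (Scan p (buf [::]), l ++ r, 1); first by apply: lrun_jump; rewrite live_r.
  by exists [::], (l ++ r); rewrite live_cat live_l live_r.
Qed.

Lemma sim_lba_complete w : L_GRL A w -> lba_accepts sim_lba w.
Proof.
case=> qf [final_qf acc].
have start : lrun (Ret (gstart A), map Some w, 0) (Scan (gstart A) (buf [::]), map Some w, 1).
  by apply/star1/lstep_L/classic_boolP; left.
have init : sim_config ([::], gstart A, w) (Scan (gstart A) (buf [::]), map Some w, 1).
  by exists [::], (map Some w); rewrite live_map_Some.
have [c run_c [l [r [Ec blank_l blank_r]]]] := star_sim sim_config_gstep acc init; subst c.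
have [tp [i run_acc]] := lrun_accept final_qf blank_l blank_r.
exists Acc, tp, i; split; first by rewrite inE.
exact: star_trans start (star_trans run_c run_acc).
Qed.

End Simulation.

Lemma GRLOWJ_CS (Sigma : finType) (L : seq Sigma -> Prop) : GRLOWJ L -> CS L.
Proof.
case=> A accA; exists (sim_lba A) => w; rewrite accA.
by split; [apply: sim_lba_complete | apply: sim_lba_sound].
Qed.

Theorem proposition5 :
  (forall (Sigma : finType) (L : seq Sigma -> Prop), GRLOWJ L -> CS L) /\
  (exists (Sigma : finType) (L : seq Sigma -> Prop), CS L /\ ~ GRLOWJ L).
Proof.
split; first exact: GRLOWJ_CS.
by exists _, pow2_words; split; [exact: pow2_words_CS | exact: pow2_words_not_GRLOWJ].
Qed.
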